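(* Let $G_0=(V_0,w_0)$ and $G_1=(V_1,w_1)$ be weighted graphs with disjoint vertex sets, let $v_0\in V_0$, $v_1\in V_1$, and let $G=G_0^{v_0}\oplus G_1^{v_1}$ be their direct union. Let $c_b$ be the minimum cut weight of $G_b$ for $b\in\{0,1\}$. If $c_0=c_1$ then $\mathrm{cdim}(G)=\mathrm{cdim}(G_0)+\mathrm{cdim}(G_1)$, and if $c_b<c_{1-b}$ then $\mathrm{cdim}(G)=\mathrm{cdim}(G_b)$.
   Context: A weighted graph $G=(V,w)$ assigns a nonnegative weight to each unordered pair of distinct vertices; $E=\{e:w(e)>0\}$. For $\emptyset\ne X\subsetneq V$, $\Delta(X)$ is the set of edges with exactly one endpoint in $X$; $\mathcal{M}(G)$ is the set of minimum-weight cuts; $\chi(S)$ is the characteristic vector of $S$ indexed by $E$; $\mathrm{cdim}(G)=\dim\,\mathrm{span}\{\chi(S):S\in\mathcal{M}(G)\}$. The direct union $G_0^{v_0}\oplus G_1^{v_1}=(V,w)$ identifies $v_0$ and $v_1$ into a new vertex $v$: $V=(V_0\cup V_1\cup\{v\})\setminus\{v_0,v_1\}$, and $w(\{x,y\})=w_b(\{x,y\})$ if $x,y\in V_b\setminus\{v_b\}$, $w(\{x,v\})=w_b(\{x,v_b\})$ if $x\in V_b\setminus\{v_b\}$ (for $b\in\{0,1\}$), and $w(\{x,y\})=0$ otherwise. *)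

From HB Require Import structures.
From mathcomp Require Import all_boot all_order all_algebra.
Set Implicit Arguments. Unset Strict Implicit. Unset Printing Implicit Defensive.
Import Order.TTheory GRing.Theory Num.Theory.
Local Open Scope ring_scope.

(* A weighted graph on a finite vertex type V is given by a weight function
   w : {set V} -> R, of which only the values on 2-element sets (unordered
   pairs of distinct vertices) are meaningful. *)

Section Graphs.
Variables (R : realFieldType) (V : finType).

Definition nonneg_weights (w : {set V} -> R) : Prop :=
  forall e : {set V}, #|e| = 2%N -> 0 <= w e.

Definition edges (w : {set V} -> R) : {set {set V}} :=
  [set e : {set V} | (#|e| == 2%N) && (0 < w e)].

Definition Delta (w : {set V} -> R) (X : {set V}) : {set {set V}} :=
  [set e in edges w | #|e :&: X| == 1%N].

Definition cut_weight (w : {set V} -> R) (X : {set V}) : R :=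
  \sum_(e in Delta w X) w e.

Definition proper_nonempty (X : {set V}) : bool := (X != set0) && (X != setT).

Definition is_min_cut_weight (w : {set V} -> R) (c : R) : Prop :=
  (exists X, proper_nonempty X /\ cut_weight w X = c) /\
  (forall X, proper_nonempty X -> c <= cut_weight w X).

Definition min_cuts (w : {set V} -> R) : {set {set {set V}}} :=
  [set S | [exists X, [&& proper_nonempty X, S == Delta w X &
      [forall Y, proper_nonempty Y ==> (cut_weight w X <= cut_weight w Y)]]]].

Definition cut_matrix (w : {set V} -> R) : 'M[R]_(#|min_cuts w|, #|edges w|) :=
  \matrix_(i < #|min_cuts w|, j < #|edges w|)
     (if enum_val j \in enum_val i then 1 else 0).

Definition cdim (w : {set V} -> R) : nat := \rank (cut_matrix w).

End Graphs.

(* Direct union G_0^{v_0} (+) G_1^{v_1}: vertex set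
   (V_0 \ {v_0}) u (V_1 \ {v_1}) u {v}, with v represented by None. *)
Section DirectUnion.
Variables (R : realFieldType) (V0 V1 : finType) (v0 : V0) (v1 : V1).

Definition DU : finType :=
  option ({x : V0 | x != v0} + {x : V1 | x != v1})%type.

Definition to0 (x : DU) : option V0 :=
  match x with
  | None => Some v0
  | Some (inl y) => Some (val y)
  | Some (inr _) => None
  end.

Definition to1 (x : DU) : option V1 :=
  match x with
  | None => Some v1
  | Some (inl _) => None
  | Some (inr y) => Some (val y)
  end.

Definition dunion (w0 : {set V0} -> R) (w1 : {set V1} -> R) : {set DU} -> R :=
  fun e =>
    if e \subset [pred x | to0 x] then w0 [set odflt v0 (to0 x) | x in e]
    else if e \subset [pred x | to1 x] then w1 [set odflt v1 (to1 x) | x in e]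
    else 0.

End DirectUnion.

From HB Require Import structures.
From mathcomp Require Import all_boot all_order all_algebra.
From mathcomp Require Import lra.
Set Implicit Arguments. Unset Strict Implicit. Unset Printing Implicit Defensive.
Import Order.TTheory GRing.Theory Num.Theory.
Local Open Scope ring_scope.

(* A vertex set X of G has a trace on V0 and on
   V1 (pre0 X, pre1 X); the cut of X in G is the disjoint union of the lifted
   cuts of its traces, so its weight is the sum of theirs.  Since a proper X
   has a proper trace on some side, every cut of G weighs at least
   min(c0, c1), and extending a minimum cut of G_b to G shows that this bound
   is attained.  Hence the minimum cuts of G are exactly the lifted minimum
   cuts of the side(s) b with c_b minimal (min_cuts_dunion).

   cdim is the rank of the matrix of characteristic vectors of the minimum
   cuts.  This rank is invariant under injective relabelling of the ground
   set (so lifted cuts of G_b have rank cdim G_b), and additive for families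
   with disjoint supports, which is the case for lifted cuts of G0 and G1
   since no edge of G lies on both sides of v. *)

Section FamilyMatrices.
Variable F : fieldType.

Definition chi_row (T : finType) (S : {set T}) : 'rV[F]_#|T| :=
  \row_j ((enum_val j \in S)%:R).

Definition family_mx (T : finType) (Fm : {set {set T}}) : 'M[F]_(#|Fm|, #|T|) :=
  \matrix_(i < #|Fm|) chi_row (enum_val i).

Definition graph_mx (T T' : finType) (g : T -> T') : 'M[F]_(#|T|, #|T'|) :=
  \matrix_(t, t') ((g (enum_val t) == enum_val t')%:R).

Lemma sum_enum_val (T : finType) (G : T -> F) :
  \sum_(j < #|T|) G (enum_val j) = \sum_(x : T) G x.
Proof. by rewrite (big_enum_val (A := T)). Qed.

Lemma sum_indicator_graph (T T' : finType) (g : T -> T') (S : {set T'}) (x : T) :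
  \sum_(y : T') ((y \in S)%:R * (g x == y)%:R : F) = (g x \in S)%:R.
Proof.
rewrite (bigD1 (g x)) //= eqxx mulr1 big1 ?addr0 // => y Hy.
by rewrite eq_sym (negPf Hy) mulr0.
Qed.

Lemma sum_indicator_image (T T' : finType) (g : T -> T') (S : {set T}) (y : T') :
  injective g ->
  \sum_(x : T) ((x \in S)%:R * (g x == y)%:R : F) = (y \in g @: S)%:R.
Proof.
move=> g_inj; have [/imsetP [x0 Sx0 ->]|yNgS] := boolP (y \in g @: S).
  rewrite (bigD1 x0) //= Sx0 eqxx mulr1 big1 ?addr0 // => x /negPf neq_x.
  by rewrite (inj_eq g_inj) neq_x mulr0.
rewrite big1 // => x _; have [Sx|] := boolP (x \in S); last by rewrite mul0r.
have [gx_y|] := eqVneq (g x) y; last by rewrite mulr0.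
by move: yNgS; rewrite -gx_y imset_f.
Qed.

Lemma chi_row_graph (T T' : finType) (g : T -> T') (S : {set T}) :
  injective g -> chi_row S *m graph_mx g = chi_row (g @: S).
Proof.
move=> g_inj; apply/rowP => j; rewrite !mxE.
under eq_bigr do rewrite !mxE.
by rewrite (sum_enum_val (fun x => (x \in S)%:R * (g x == enum_val j)%:R))
           sum_indicator_image.
Qed.

Lemma chi_row_graph_tr (T T' : finType) (g : T -> T') (S : {set T'}) :
  chi_row S *m (graph_mx g)^T = chi_row (g @^-1: S).
Proof.
apply/rowP => j; rewrite !mxE.
under eq_bigr do rewrite !mxE.
by rewrite (sum_enum_val (fun y => (y \in S)%:R * (g (enum_val j) == y)%:R))
           sum_indicator_graph inE.
Qed.

Lemma row_family_mx (T : finType) (Fm : {set {set T}}) (i : 'I_#|Fm|) :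
  row i (family_mx Fm) = chi_row (enum_val i).
Proof. by rewrite rowK. Qed.

Lemma chi_row_sub (T : finType) (Fm : {set {set T}}) (S : {set T}) :
  S \in Fm -> (chi_row S <= family_mx Fm)%MS.
Proof.
move=> FmS; have := row_sub (enum_rank_in FmS S) (family_mx Fm).
by rewrite row_family_mx enum_rankK_in.
Qed.

Lemma family_mx_sub (T : finType) (Fm : {set {set T}}) m (A : 'M[F]_(m, #|T|)) :
  (forall S, S \in Fm -> (chi_row S <= A)%MS) -> (family_mx Fm <= A)%MS.
Proof.
move=> sub_A; apply/row_subP => i; rewrite row_family_mx; apply: sub_A.
exact: enum_valP.
Qed.

Lemma rank_family_relabel (T T' : finType) (g : T -> T') (Fm : {set {set T}}) :
  injective g -> \rank (family_mx [set g @: S | S : {set T} in Fm]) = \rank (family_mx Fm).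
Proof.
move=> g_inj.
have image_eq : (family_mx [set g @: S | S : {set T} in Fm] == family_mx Fm *m graph_mx g)%MS.
  apply/andP; split.
    apply: family_mx_sub => _ /imsetP [S FmS ->].
    by rewrite -chi_row_graph //; apply/submxMr/chi_row_sub.
  apply/row_subP => i; rewrite row_mul row_family_mx chi_row_graph //.
  by apply/chi_row_sub/imset_f/enum_valP.
have back : family_mx Fm = family_mx Fm *m graph_mx g *m (graph_mx g)^T.
  apply/row_matrixP => i; rewrite !row_mul row_family_mx chi_row_graph //.
  by rewrite chi_row_graph_tr; congr chi_row; apply/setP => x; rewrite inE mem_imset.
apply/eqP; rewrite (eqmx_rank image_eq) eqn_leq mxrankM_maxl /= {1}back.
exact: mxrankM_maxl.
Qed.

Lemma chi_row_mask (T : finType) (S A : {set T}) :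
  chi_row S *m diag_mx (chi_row A) = chi_row (S :&: A).
Proof.
rewrite mul_mx_diag; apply/rowP => j; rewrite !mxE inE.
by case: (_ \in S); case: (_ \in A); rewrite ?mulr0 ?mulr1.
Qed.

Lemma family_mx_mask_in (T : finType) (Fm : {set {set T}}) (A : {set T}) :
  (forall S, S \in Fm -> S \subset A) -> family_mx Fm *m diag_mx (chi_row A) = family_mx Fm.
Proof.
move=> subA; apply/row_matrixP => i; rewrite row_mul row_family_mx chi_row_mask.
by move/setIidPl: (subA _ (enum_valP i)) => ->.
Qed.

Lemma family_mx_mask_out (T : finType) (Fm : {set {set T}}) (A : {set T}) :
  (forall S, S \in Fm -> [disjoint S & A]) -> family_mx Fm *m diag_mx (chi_row A) = 0.
Proof.
move=> disA; apply/row_matrixP => i; rewrite row_mul row_family_mx chi_row_mask row0.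
move/disjoint_setI0: (disA _ (enum_valP i)) => ->.
by apply/rowP => j; rewrite !mxE inE.
Qed.

(* Families supported on disjoint parts of the ground set span independent
   subspaces, so ranks add up: cdim is additive over such unions. *)
Lemma rank_family_disjoint_union (T : finType) (F0 F1 : {set {set T}}) (A0 A1 : {set T}) :
  (forall S, S \in F0 -> S \subset A0) ->
  (forall S, S \in F1 -> S \subset A1) -> [disjoint A0 & A1] ->
  \rank (family_mx (F0 :|: F1)) = (\rank (family_mx F0) + \rank (family_mx F1))%N.
Proof.
move=> sub0 sub1 disA.
have sum_eq : (family_mx (F0 :|: F1) == family_mx F0 + family_mx F1)%MS.
  apply/andP; split.
    apply: family_mx_sub => S; rewrite inE => /orP [] FS.
      by apply: submx_trans (addsmxSl _ _); apply: chi_row_sub.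
    by apply: submx_trans (addsmxSr _ _); apply: chi_row_sub.
  by rewrite addsmx_sub; apply/andP; split; apply: family_mx_sub => S FS;
    apply: chi_row_sub; rewrite inE FS ?orbT.
rewrite (eqmx_rank sum_eq) mxrank_disjoint_sum //.
set C := (family_mx F0 :&: family_mx F1)%MS.
have [D0 def_C0] := submxP (capmxSl (family_mx F0) (family_mx F1)).
have [D1 def_C1] := submxP (capmxSr (family_mx F0) (family_mx F1)).
have C_in : C *m diag_mx (chi_row A0) = C by rewrite /C def_C0 -mulmxA family_mx_mask_in.
have C_out : C *m diag_mx (chi_row A0) = 0.
  rewrite /C def_C1 -mulmxA family_mx_mask_out ?mulmx0 // => S F1S.
  by rewrite disjoint_sym (disjointWr (sub1 _ F1S)) // disjoint_sym.
by rewrite -C_in C_out.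
Qed.

End FamilyMatrices.

Section Cuts.
Variables (R : realFieldType) (V : finType) (w : {set V} -> R).

Lemma min_cut_sub_edges (S : {set {set V}}) : S \in min_cuts w -> S \subset edges w.
Proof.
rewrite inE => /existsP [X /and3P [_ /eqP -> _]].
by apply/subsetP => e; rewrite inE => /andP [].
Qed.

Definition edge_select_mx : 'M[R]_(#|{set V}|, #|edges w|) :=
  \matrix_(t, j) ((enum_val t == enum_val j)%:R).

(* cdim is the rank of the family of minimum cuts, viewed as sets of pairs:
   min cuts only contain edges, so indexing by E or by all of {set V} gives
   the same rank. *)
Lemma cdim_family_rank : cdim w = \rank (family_mx R (min_cuts w)).
Proof.
have cut_eq : cut_matrix w = family_mx R (min_cuts w) *m edge_select_mx.
  apply/matrixP => i j; rewrite !mxE.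
  under eq_bigr do rewrite !mxE.
  rewrite (sum_enum_val (fun x => (x \in enum_val i)%:R * (x == enum_val j)%:R)).
  under eq_bigr do rewrite eq_sym.
  by rewrite (sum_indicator_graph R id); case: (_ \in _).
have family_eq : family_mx R (min_cuts w) = cut_matrix w *m edge_select_mx^T.
  apply/matrixP => i t; rewrite !mxE.
  under eq_bigr do rewrite !mxE.
  rewrite -(big_enum_val (A := pred_of_set (edges w))
     (fun x => (if x \in enum_val i then 1 else 0) * (enum_val t == x)%:R)) /=.
  rewrite big_mkcond /=
    (eq_bigr (fun x => (x \in enum_val i)%:R * (id (enum_val t) == x)%:R)).
    by rewrite sum_indicator_graph.
  move=> x _; have [Sx|_] := boolP (x \in enum_val i).
    by rewrite (subsetP (min_cut_sub_edges (enum_valP i)) _ Sx).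
  by case: (_ \in edges w); rewrite mul0r.
apply/eqP; rewrite /cdim eqn_leq {1}cut_eq mxrankM_maxl /= {1}family_eq.
exact: mxrankM_maxl.
Qed.

Lemma cut_weight_ge0 (X : {set V}) : 0 <= cut_weight w X.
Proof.
by apply: sumr_ge0 => e; rewrite !inE => /andP [/andP [_ /ltW]].
Qed.

Lemma Delta_trivial (X : {set V}) : ~~ proper_nonempty X -> Delta w X = set0.
Proof.
rewrite /proper_nonempty negb_and !negbK => /orP [] /eqP ->;
  apply/setP => e; rewrite !inE.
  by rewrite setI0 cards0 andbF.
by rewrite setIT; apply/negP => /andP [/andP [/eqP -> _]].
Qed.

Lemma Delta_weight0 (X : {set V}) : cut_weight w X = 0 -> Delta w X = set0.
Proof.
move=> w0; apply/setP => e; rewrite [RHS]inE; apply/negP => Xe.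
have Delta_ge0 e' : e' \in Delta w X -> 0 <= w e'.
  by rewrite !inE => /andP [/andP [_ /ltW]].
move: Xe (psumr_eq0P Delta_ge0 w0 Xe).
by rewrite !inE => /andP [/andP [_ + _]] => /[swap] ->; rewrite ltxx.
Qed.

Lemma min_cuts_intro (X : {set V}) : proper_nonempty X ->
  (forall Y, proper_nonempty Y -> cut_weight w X <= cut_weight w Y) ->
  Delta w X \in min_cuts w.
Proof.
move=> X_proper X_min; rewrite inE; apply/existsP; exists X.
by rewrite X_proper eqxx; apply/forallP => Y; apply/implyP; apply: X_min.
Qed.

Lemma min_cuts_elim (S : {set {set V}}) : S \in min_cuts w ->
  exists X, [/\ proper_nonempty X, S = Delta w X &
    forall Y, proper_nonempty Y -> cut_weight w X <= cut_weight w Y].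
Proof.
rewrite inE => /existsP [X /and3P [X_proper /eqP -> /forallP X_min]].
by exists X; split => // Y Y_proper; have := X_min Y; rewrite Y_proper.
Qed.

End Cuts.

Section DirectUnionStructure.
Variables (R : realFieldType) (V0 V1 : finType) (v0 : V0) (v1 : V1).
Variables (w0 : {set V0} -> R) (w1 : {set V1} -> R).

Local Notation D := (DU v0 v1).
Local Notation G := (dunion (v0:=v0) (v1:=v1) w0 w1).

Definition lift0 (y : V0) : D :=
  if (insub y : option {x : V0 | x != v0}) is Some y' then Some (inl y') else None.
Definition lift1 (y : V1) : D :=
  if (insub y : option {x : V1 | x != v1}) is Some y' then Some (inr y') else None.

Lemma lift0_v0 : lift0 v0 = None.
Proof. by rewrite /lift0 insubF // eqxx. Qed.
Lemma lift1_v1 : lift1 v1 = None.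
Proof. by rewrite /lift1 insubF // eqxx. Qed.

Lemma to0_lift0 (y : V0) : to0 (lift0 y) = Some y.
Proof.
by rewrite /lift0; case: insubP => [y' _ <-|] //=; rewrite negbK => /eqP ->.
Qed.
Lemma to1_lift1 (y : V1) : to1 (lift1 y) = Some y.
Proof.
by rewrite /lift1; case: insubP => [y' _ <-|] //=; rewrite negbK => /eqP ->.
Qed.

Lemma to1_lift0 (y : V0) : to1 (lift0 y) = if y == v0 then Some v1 else None.
Proof.
by rewrite /lift0; case: insubP => [y' /negPf -> _|] //=; rewrite negbK => ->.
Qed.
Lemma to0_lift1 (y : V1) : to0 (lift1 y) = if y == v1 then Some v0 else None.
Proof.
by rewrite /lift1; case: insubP => [y' /negPf -> _|] //=; rewrite negbK => ->.
Qed.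

Lemma lift0_inj : injective lift0.
Proof. by move=> y y' /(congr1 (@to0 _ _ v0 v1)); rewrite !to0_lift0 => [[]]. Qed.
Lemma lift1_inj : injective lift1.
Proof. by move=> y y' /(congr1 (@to1 _ _ v0 v1)); rewrite !to1_lift1 => [[]]. Qed.

Lemma to0_Some (x : D) (y : V0) : to0 x = Some y -> x = lift0 y.
Proof. by case: x => [[z|z]|] //= [<-]; rewrite ?lift0_v0 // /lift0 valK. Qed.
Lemma to1_Some (x : D) (y : V1) : to1 x = Some y -> x = lift1 y.
Proof. by case: x => [[z|z]|] //= [<-]; rewrite ?lift1_v1 // /lift1 valK. Qed.

Lemma lift_cover (x : D) : (exists y, x = lift0 y) \/ (exists y, x = lift1 y).
Proof.
case: x => [[z|z]|].
- by left; exists (val z); rewrite /lift0 valK.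
- by right; exists (val z); rewrite /lift1 valK.
- by left; exists v0; rewrite lift0_v0.
Qed.

Definition im0 (e : {set V0}) : {set D} := lift0 @: e.
Definition im1 (e : {set V1}) : {set D} := lift1 @: e.

Lemma im0_inj : injective im0.
Proof. exact: imset_inj lift0_inj. Qed.
Lemma im1_inj : injective im1.
Proof. exact: imset_inj lift1_inj. Qed.

Lemma card_im0 (e : {set V0}) : #|im0 e| = #|e|.
Proof. exact: card_imset lift0_inj. Qed.
Lemma card_im1 (e : {set V1}) : #|im1 e| = #|e|.
Proof. exact: card_imset lift1_inj. Qed.

Lemma im0_dom (e : {set V0}) : im0 e \subset [pred x | to0 x].
Proof. by apply/subsetP => _ /imsetP [y _ ->]; rewrite inE to0_lift0. Qed.
Lemma im1_dom (e : {set V1}) : im1 e \subset [pred x | to1 x].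
Proof. by apply/subsetP => _ /imsetP [y _ ->]; rewrite inE to1_lift1. Qed.

(* The two sides of G only share the vertex v, so no pair lies in both. *)
Lemma dom_both_small (e : {set D}) :
  e \subset [pred x | to0 x] -> e \subset [pred x | to1 x] -> (#|e| <= 1)%N.
Proof.
move=> dom0 dom1; rewrite -(cards1 (None : D)); apply/subset_leq_card/subsetP.
move=> x ex; move: (subsetP dom0 x ex) (subsetP dom1 x ex); rewrite !inE.
by case: x {ex} => [[z|z]|].
Qed.

Lemma im0_proj (e : {set D}) : e \subset [pred x | to0 x] ->
  im0 [set odflt v0 (to0 x) | x in e] = e.
Proof.
move=> dom0; rewrite /im0 -imset_comp -[RHS]imset_id; apply: eq_in_imset => x ex /=.
move: (subsetP dom0 x ex); rewrite inE.
by case def_x: (to0 x) => [y|] //= _; rewrite -(to0_Some def_x).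
Qed.
Lemma im1_proj (e : {set D}) : e \subset [pred x | to1 x] ->
  im1 [set odflt v1 (to1 x) | x in e] = e.
Proof.
move=> dom1; rewrite /im1 -imset_comp -[RHS]imset_id; apply: eq_in_imset => x ex /=.
move: (subsetP dom1 x ex); rewrite inE.
by case def_x: (to1 x) => [y|] //= _; rewrite -(to1_Some def_x).
Qed.

Lemma proj_im0 (e : {set V0}) : [set odflt v0 (to0 x) | x in im0 e] = e.
Proof.
by rewrite /im0 -imset_comp -[RHS]imset_id; apply: eq_imset => x /=; rewrite to0_lift0.
Qed.
Lemma proj_im1 (e : {set V1}) : [set odflt v1 (to1 x) | x in im1 e] = e.
Proof.
by rewrite /im1 -imset_comp -[RHS]imset_id; apply: eq_imset => x /=; rewrite to1_lift1.
Qed.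

(* The weight of G restricts to w0 and w1 (on sets of size > 1 for w1, since
   the singleton {v} is claimed by the G0 side). *)
Lemma dunion_im0 (e : {set V0}) : G (im0 e) = w0 e.
Proof. by rewrite /dunion im0_dom proj_im0. Qed.
Lemma dunion_im1 (e : {set V1}) : (1 < #|e|)%N -> G (im1 e) = w1 e.
Proof.
move=> e_gt1; rewrite /dunion im1_dom proj_im1.
case: ifP => // dom0; have := dom_both_small dom0 (im1_dom e).
by rewrite card_im1 leqNgt e_gt1.
Qed.

Lemma edges_dunion :
  edges G = [set im0 e | e in edges w0] :|: [set im1 e | e in edges w1].
Proof.
apply/setP => e; apply/idP/idP.
  rewrite inE => /andP [/eqP e2]; rewrite /dunion inE.
  case: ifP => dom0.
    rewrite -(im0_proj dom0) proj_im0 => pos_e; apply/orP; left; apply: imset_f.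
    by rewrite inE pos_e andbT -card_im0 im0_proj // e2.
  case: ifP => dom1; last by rewrite ltxx.
  rewrite -(im1_proj dom1) proj_im1 => pos_e; apply/orP; right; apply: imset_f.
  by rewrite inE pos_e andbT -card_im1 im1_proj // e2.
rewrite inE => /orP [] /imsetP [e' + ->]; rewrite !inE => /andP [/eqP e2 pos_e].
  by rewrite card_im0 e2 dunion_im0.
by rewrite card_im1 e2 dunion_im1 ?e2.
Qed.

Definition pre0 (X : {set D}) : {set V0} := lift0 @^-1: X.
Definition pre1 (X : {set D}) : {set V1} := lift1 @^-1: X.

Lemma card_im0I (e : {set V0}) (X : {set D}) : #|im0 e :&: X| = #|e :&: pre0 X|.
Proof.
rewrite -card_im0; apply: eq_card => x; rewrite inE.
apply/andP/imsetP => [[/imsetP [y ey ->] Xy]|[y]].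
  by exists y => //; rewrite !inE ey.
by rewrite !inE => /andP [ey Xy] ->; split => //; apply: imset_f.
Qed.
Lemma card_im1I (e : {set V1}) (X : {set D}) : #|im1 e :&: X| = #|e :&: pre1 X|.
Proof.
rewrite -card_im1; apply: eq_card => x; rewrite inE.
apply/andP/imsetP => [[/imsetP [y ey ->] Xy]|[y]].
  by exists y => //; rewrite !inE ey.
by rewrite !inE => /andP [ey Xy] ->; split => //; apply: imset_f.
Qed.

Lemma Delta_dunion (X : {set D}) : Delta G X =
  [set im0 e | e in Delta w0 (pre0 X)] :|: [set im1 e | e in Delta w1 (pre1 X)].
Proof.
apply/setP => e; apply/idP/idP.
  rewrite inE edges_dunion inE => /andP [/orP [] /imsetP [e' Ee' ->] cross]; rewrite inE.
    by apply/orP; left; apply: imset_f; rewrite inE Ee' -card_im0I cross.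
  by apply/orP; right; apply: imset_f; rewrite inE Ee' -card_im1I cross.
rewrite inE => /orP [] /imsetP [e' + ->]; rewrite inE => /andP [Ee' cross];
  rewrite inE edges_dunion inE.
  by rewrite imset_f // card_im0I cross.
by rewrite imset_f ?orbT // card_im1I cross.
Qed.

Lemma cut_weight_dunion (X : {set D}) :
  cut_weight G X = cut_weight w0 (pre0 X) + cut_weight w1 (pre1 X).
Proof.
rewrite /cut_weight Delta_dunion.
rewrite (eq_bigl [predU [set im0 e | e in Delta w0 (pre0 X)] &
                          [set im1 e | e in Delta w1 (pre1 X)]]); last first.
  by move=> e; rewrite !inE.
rewrite bigU; last first.
  rewrite -setI_eq0; apply/eqP/setP => e; rewrite inE [RHS]inE.
  apply/negP => /andP [/imsetP [e0 _ ->] /imsetP [e1 De1 same]].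
  move: (dom_both_small (im0_dom e0)); rewrite same => /(_ (im1_dom e1)).
  by move: De1; rewrite !inE card_im1 => /andP [/andP [/eqP -> _] _].
rewrite !big_imset /=; last 2 first.
- by move=> ? ? _ _; apply: im1_inj.
- by move=> ? ? _ _; apply: im0_inj.
congr (_ + _); first by apply: eq_bigr => e _; rewrite dunion_im0.
by apply: eq_bigr => e; rewrite !inE => /andP [/andP [/eqP e2 _] _]; rewrite dunion_im1 ?e2.
Qed.

Lemma mem_pre0 (X : {set D}) (y : V0) : (y \in pre0 X) = (lift0 y \in X).
Proof. by rewrite inE. Qed.
Lemma mem_pre1 (X : {set D}) (y : V1) : (y \in pre1 X) = (lift1 y \in X).
Proof. by rewrite inE. Qed.

Lemma trace_set0 (X : {set D}) : pre0 X = set0 -> pre1 X = set0 -> X = set0.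
Proof.
move=> X0 X1; apply/setP => x; rewrite inE.
by case: (lift_cover x) => [[y ->]|[y ->]]; rewrite -?mem_pre0 -?mem_pre1 ?X0 ?X1 inE.
Qed.

Lemma trace_setT (X : {set D}) : pre0 X = setT -> pre1 X = setT -> X = setT.
Proof.
move=> X0 X1; apply/setP => x; rewrite inE.
by case: (lift_cover x) => [[y ->]|[y ->]]; rewrite -?mem_pre0 -?mem_pre1 ?X0 ?X1 inE.
Qed.

(* A proper nonempty X has a proper nonempty trace on V0 or on V1: both traces
   contain the glued vertex or neither does, so they cannot be trivial in
   opposite ways. *)
Lemma proper_trace (X : {set D}) :
  proper_nonempty X -> proper_nonempty (pre0 X) || proper_nonempty (pre1 X).
Proof.
move=> X_proper; apply/negPn/negP; rewrite negb_or /proper_nonempty !negb_and !negbK.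
have v_in : (v0 \in pre0 X) = (v1 \in pre1 X) by rewrite !inE lift0_v0 lift1_v1.
case/andP => /orP [] /eqP X0 /orP [] /eqP X1.
- by move: X_proper; rewrite (trace_set0 X0 X1) /proper_nonempty eqxx.
- by move: v_in; rewrite X0 X1 !inE.
- by move: v_in; rewrite X0 X1 !inE.
- by move: X_proper; rewrite (trace_setT X0 X1) /proper_nonempty eqxx andbF.
Qed.

End DirectUnionStructure.

Section DirectUnionCuts.
Variables (R : realFieldType) (V0 V1 : finType) (v0 : V0) (v1 : V1).
Variables (w0 : {set V0} -> R) (w1 : {set V1} -> R).

Local Notation D := (DU v0 v1).
Local Notation G := (dunion (v0:=v0) (v1:=v1) w0 w1).
Local Notation im0 := (im0 v0 v1).
Local Notation im1 := (im1 v0 v1).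

(* Extending a vertex set of G_b to G: the new vertex v joins it iff v_b is
   in it, and the whole other side stays on the same side as v. *)
Definition ext0 (Y : {set V0}) : {set D} := [set x | odflt v0 (to0 x) \in Y].
Definition ext1 (Y : {set V1}) : {set D} := [set x | odflt v1 (to1 x) \in Y].

Lemma pre0_ext0 (Y : {set V0}) : pre0 (ext0 Y) = Y.
Proof. by apply/setP => y; rewrite !inE to0_lift0. Qed.
Lemma pre1_ext1 (Y : {set V1}) : pre1 (ext1 Y) = Y.
Proof. by apply/setP => y; rewrite !inE to1_lift1. Qed.

Lemma pre1_ext0 (Y : {set V0}) : pre1 (ext0 Y) = [set _ : V1 | v0 \in Y].
Proof. by apply/setP => y; rewrite !inE to0_lift1; case: (y == v1). Qed.
Lemma pre0_ext1 (Y : {set V1}) : pre0 (ext1 Y) = [set _ : V0 | v1 \in Y].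
Proof. by apply/setP => y; rewrite !inE to1_lift0; case: (y == v0). Qed.

Lemma const_set_trivial (T : finType) (b : bool) : ~~ proper_nonempty [set _ : T | b].
Proof.
rewrite /proper_nonempty negb_and !negbK.
by case: b; [apply/orP; right|apply/orP; left]; apply/eqP/setP => y; rewrite !inE.
Qed.

Lemma proper_ext0 (Y : {set V0}) : proper_nonempty Y -> proper_nonempty (ext0 Y).
Proof.
rewrite -{1}(pre0_ext0 Y); apply: contraLR.
rewrite /proper_nonempty !negb_and !negbK => /orP [] /eqP ->.
  by apply/orP; left; apply/eqP/setP => y; rewrite !inE.
by apply/orP; right; apply/eqP/setP => y; rewrite !inE.
Qed.
Lemma proper_ext1 (Y : {set V1}) : proper_nonempty Y -> proper_nonempty (ext1 Y).
Proof.
rewrite -{1}(pre1_ext1 Y); apply: contraLR.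
rewrite /proper_nonempty !negb_and !negbK => /orP [] /eqP ->.
  by apply/orP; left; apply/eqP/setP => y; rewrite !inE.
by apply/orP; right; apply/eqP/setP => y; rewrite !inE.
Qed.

Lemma Delta_ext0 (Y : {set V0}) : Delta G (ext0 Y) = [set im0 e | e in Delta w0 Y].
Proof.
rewrite Delta_dunion pre0_ext0 pre1_ext0 (Delta_trivial _ (const_set_trivial _ _)).
by rewrite imset0 setU0.
Qed.
Lemma Delta_ext1 (Y : {set V1}) : Delta G (ext1 Y) = [set im1 e | e in Delta w1 Y].
Proof.
rewrite Delta_dunion pre1_ext1 pre0_ext1 (Delta_trivial _ (const_set_trivial _ _)).
by rewrite imset0 set0U.
Qed.

Lemma cut_weight_ext0 (Y : {set V0}) : cut_weight G (ext0 Y) = cut_weight w0 Y.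
Proof.
rewrite cut_weight_dunion pre0_ext0 pre1_ext0 /cut_weight.
by rewrite (Delta_trivial _ (const_set_trivial _ _)) big_set0 addr0.
Qed.
Lemma cut_weight_ext1 (Y : {set V1}) : cut_weight G (ext1 Y) = cut_weight w1 Y.
Proof.
rewrite cut_weight_dunion pre1_ext1 pre0_ext1 /cut_weight.
by rewrite (Delta_trivial _ (const_set_trivial _ _)) big_set0 add0r.
Qed.

Definition lift_cut0 (S : {set {set V0}}) : {set {set D}} := [set im0 e | e in S].
Definition lift_cut1 (S : {set {set V1}}) : {set {set D}} := [set im1 e | e in S].

Variables (c0 c1 : R) (hc0 : is_min_cut_weight w0 c0) (hc1 : is_min_cut_weight w1 c1).

Lemma cut_weight_dunion_lb (X : {set D}) :
  proper_nonempty X -> c0 <= cut_weight G X \/ c1 <= cut_weight G X.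
Proof.
move=> X_proper; rewrite cut_weight_dunion.
have ge0 := cut_weight_ge0 w0 (pre0 X); have ge1 := cut_weight_ge0 w1 (pre1 X).
case/orP: (proper_trace X_proper) => [/hc0.2|/hc1.2]; [left|right]; lra.
Qed.

Lemma min_cut_dunion_ub (X : {set D}) :
  (forall Y, proper_nonempty Y -> cut_weight G X <= cut_weight G Y) ->
  cut_weight G X <= c0 /\ cut_weight G X <= c1.
Proof.
move=> X_min; case: hc0 hc1 => [[Z0 [Z0_proper <-]] _] [[Z1 [Z1_proper <-]] _].
rewrite -cut_weight_ext0 -cut_weight_ext1.
by split; apply: X_min; [apply: proper_ext0|apply: proper_ext1].
Qed.

(* A minimum cut of G with a proper trace on V0 is a lifted minimum cut of G0
   (its part in G1 weighs 0, hence is empty), and then c0 <= c1. *)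
Lemma min_cut_dunion_side0 (X : {set D}) :
  (forall Y, proper_nonempty Y -> cut_weight G X <= cut_weight G Y) ->
  proper_nonempty (pre0 X) ->
  c0 <= c1 /\ Delta G X \in [set lift_cut0 S | S in min_cuts w0].
Proof.
move=> X_min X0_proper; have [ub0 ub1] := min_cut_dunion_ub X_min.
rewrite cut_weight_dunion in ub0 ub1.
have lb0 := hc0.2 _ X0_proper.
have ge0 := cut_weight_ge0 w0 (pre0 X); have ge1 := cut_weight_ge0 w1 (pre1 X).
have Delta1 : Delta w1 (pre1 X) = set0.
  have [X1_proper|] := boolP (proper_nonempty (pre1 X)); last exact: Delta_trivial.
  by apply: Delta_weight0; lra.
split; first lra.
rewrite Delta_dunion Delta1 imset0 setU0; apply/imset_f/min_cuts_intro => // Y Y_proper.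
have := hc0.2 _ Y_proper; lra.
Qed.

Lemma min_cut_dunion_side1 (X : {set D}) :
  (forall Y, proper_nonempty Y -> cut_weight G X <= cut_weight G Y) ->
  proper_nonempty (pre1 X) ->
  c1 <= c0 /\ Delta G X \in [set lift_cut1 S | S in min_cuts w1].
Proof.
move=> X_min X1_proper; have [ub0 ub1] := min_cut_dunion_ub X_min.
rewrite cut_weight_dunion in ub0 ub1.
have lb1 := hc1.2 _ X1_proper.
have ge0 := cut_weight_ge0 w0 (pre0 X); have ge1 := cut_weight_ge0 w1 (pre1 X).
have Delta0 : Delta w0 (pre0 X) = set0.
  have [X0_proper|] := boolP (proper_nonempty (pre0 X)); last exact: Delta_trivial.
  by apply: Delta_weight0; lra.
split; first lra.
rewrite Delta_dunion Delta0 imset0 set0U; apply/imset_f/min_cuts_intro => // Y Y_proper.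
have := hc1.2 _ Y_proper; lra.
Qed.

Lemma lift_min_cut0 (S : {set {set V0}}) :
  S \in min_cuts w0 -> c0 <= c1 -> lift_cut0 S \in min_cuts G.
Proof.
case/min_cuts_elim => X [X_proper -> X_min] c01.
have X_c0 : cut_weight w0 X <= c0 by case: hc0 => [[Z [Z_proper <-]] _]; apply: X_min.
rewrite /lift_cut0 -Delta_ext0; apply: min_cuts_intro; first exact: proper_ext0.
by move=> Y /cut_weight_dunion_lb; rewrite cut_weight_ext0; lra.
Qed.

Lemma lift_min_cut1 (S : {set {set V1}}) :
  S \in min_cuts w1 -> c1 <= c0 -> lift_cut1 S \in min_cuts G.
Proof.
case/min_cuts_elim => X [X_proper -> X_min] c10.
have X_c1 : cut_weight w1 X <= c1 by case: hc1 => [[Z [Z_proper <-]] _]; apply: X_min.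
rewrite /lift_cut1 -Delta_ext1; apply: min_cuts_intro; first exact: proper_ext1.
by move=> Y /cut_weight_dunion_lb; rewrite cut_weight_ext1; lra.
Qed.

Lemma min_cuts_dunion : min_cuts G =
  (if c0 <= c1 then [set lift_cut0 S | S in min_cuts w0] else set0) :|:
  (if c1 <= c0 then [set lift_cut1 S | S in min_cuts w1] else set0).
Proof.
apply/setP => S; rewrite in_setU; apply/idP/idP.
  case/min_cuts_elim => X [X_proper -> X_min].
  case/orP: (proper_trace X_proper) => [/(min_cut_dunion_side0 X_min)|
                                      /(min_cut_dunion_side1 X_min)] [-> ->] //.
  by rewrite orbT.
case/orP; case: ifP => c_le; rewrite ?in_set0 // => /imsetP [S' S'_min ->].
  exact: lift_min_cut0.
exact: lift_min_cut1.
Qed.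

End DirectUnionCuts.

Section LiftedCutRanks.
Variables (R : realFieldType) (V0 V1 : finType) (v0 : V0) (v1 : V1).
Variables (w0 : {set V0} -> R) (w1 : {set V1} -> R).

Local Notation D := (DU v0 v1).

(* Lifting is an injective relabelling of pairs, so it preserves cdim. *)
Lemma rank_lifted_cuts0 :
  \rank (family_mx R [set lift_cut0 v0 v1 S | S in min_cuts w0]) = cdim w0.
Proof. by rewrite cdim_family_rank -(rank_family_relabel _ _ (@im0_inj _ _ v0 v1)). Qed.
Lemma rank_lifted_cuts1 :
  \rank (family_mx R [set lift_cut1 v0 v1 S | S in min_cuts w1]) = cdim w1.
Proof. by rewrite cdim_family_rank -(rank_family_relabel _ _ (@im1_inj _ _ v0 v1)). Qed.

(* Lifted cuts of G0 and of G1 consist of pairs on opposite sides of v, so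
   their characteristic vectors have disjoint supports and the ranks add. *)
Lemma rank_lifted_cuts_union :
  \rank (family_mx R ([set lift_cut0 v0 v1 S | S in min_cuts w0] :|:
                      [set lift_cut1 v0 v1 S | S in min_cuts w1]))
  = (cdim w0 + cdim w1)%N.
Proof.
rewrite -rank_lifted_cuts0 -rank_lifted_cuts1.
apply: (@rank_family_disjoint_union _ _ _ _
  [set e : {set D} | (e \subset [pred x | to0 x]) && (1 < #|e|)%N]
  [set e : {set D} | (e \subset [pred x | to1 x]) && (1 < #|e|)%N]).
- move=> _ /imsetP [S S_min ->]; apply/subsetP => _ /imsetP [e Se ->].
  have := subsetP (min_cut_sub_edges S_min) _ Se; rewrite !inE => /andP [/eqP e2 _].
  by rewrite im0_dom card_im0 e2.
- move=> _ /imsetP [S S_min ->]; apply/subsetP => _ /imsetP [e Se ->].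
  have := subsetP (min_cut_sub_edges S_min) _ Se; rewrite !inE => /andP [/eqP e2 _].
  by rewrite im1_dom card_im1 e2.
- rewrite -setI_eq0; apply/eqP/setP => e; rewrite !inE.
  apply/negP => /andP [/andP [dom0 e_gt1] /andP [dom1 _]].
  by have := dom_both_small dom0 dom1; rewrite leqNgt e_gt1.
Qed.

End LiftedCutRanks.

Theorem mainTheorem19 (R : realFieldType) (V0 V1 : finType)
    (w0 : {set V0} -> R) (w1 : {set V1} -> R) (v0 : V0) (v1 : V1)
    (hw0 : nonneg_weights w0) (hw1 : nonneg_weights w1)
    (c0 c1 : R) (hc0 : is_min_cut_weight w0 c0) (hc1 : is_min_cut_weight w1 c1) :
  [/\ c0 = c1 -> cdim (dunion (v0:=v0) (v1:=v1) w0 w1) = (cdim w0 + cdim w1)%N,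
      c0 < c1 -> cdim (dunion (v0:=v0) (v1:=v1) w0 w1) = cdim w0
    & c1 < c0 -> cdim (dunion (v0:=v0) (v1:=v1) w0 w1) = cdim w1].
Proof.
have cuts_G := min_cuts_dunion v0 v1 hc0 hc1.
split=> [c_eq|c_lt|c_gt]; rewrite cdim_family_rank cuts_G.
- by rewrite c_eq lexx rank_lifted_cuts_union.
- by rewrite (ltW c_lt) (lt_geF c_lt) setU0 rank_lifted_cuts0.
- by rewrite (ltW c_gt) (lt_geF c_gt) set0U rank_lifted_cuts1.
Qed.
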